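(* Let $\mathcal{A}$ be an abelian group. Let $M_{12}(p_1,p_2)$ be the graph with vertices $v_1,\dots,v_5$ and edges $v_1v_2$, $v_2v_3$, $v_2v_4$, $v_2v_5$, $v_3v_4$, $v_4v_5$, together with $p_1\ge 1$ pendant vertices adjacent to $v_1$ and $p_2\ge0$ pendant vertices adjacent to $v_2$. Then $M_{12}(p_1,p_2)$ is $\mathcal{A}$-vertex magic if and only if $p_2=0$, $\mathcal{A}$ contains an involution $h$, and there exist $g_1,g_2\in\mathcal{A}\setminus\{0\}$ with $g_1+g_2=h$.
   Context: An involution is an element of order $2$. A map $\ell:V(G)\to\mathcal{A}\setminus\{0\}$ is an $\mathcal{A}$-vertex magic labeling if there is $\mu\in\mathcal{A}$ with $\sum_{u\in N(v)}\ell(u)=\mu$ for every vertex $v$; $G$ is $\mathcal{A}$-vertex magic if such a labeling exists. A pendant vertex has degree $1$. *)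

From HB Require Import structures.
From mathcomp Require Import all_boot all_order all_algebra.
Set Implicit Arguments. Unset Strict Implicit. Unset Printing Implicit Defensive.
Import GRing.Theory.
Local Open Scope ring_scope.

Definition vertex_magic_labeling (V : finType) (adj : rel V) (A : zmodType)
  (l : V -> A) : Prop :=
  (forall v, l v != 0) /\ exists mu : A, forall v, \sum_(u | adj v u) l u = mu.

Definition vertex_magic (V : finType) (adj : rel V) (A : zmodType) : Prop :=
  exists l : V -> A, vertex_magic_labeling adj l.

Definition involution (A : zmodType) (h : A) : Prop := h != 0 /\ h + h = 0.

(* Vertices of M12(p1,p2): inl i is v_{i+1} (i < 5);
   inr (inl k) : pendants at v1;  inr (inr k) : pendants at v2. *)
Definition M12_vert (p1 p2 : nat) : finType := ('I_5 + ('I_p1 + 'I_p2))%type.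

Definition M12_core (i j : 'I_5) : bool :=
  ((val i, val j) \in
     [:: (0,1); (1,2); (1,3); (1,4); (2,3); (3,4)]%N).

Definition M12_adj (p1 p2 : nat) : rel (M12_vert p1 p2) :=
  fun x y =>
    match x, y with
    | inl i, inl j => M12_core i j || M12_core j i
    | inl i, inr (inl _) => val i == 0%N
    | inr (inl _), inl i => val i == 0%N
    | inl i, inr (inr _) => val i == 1%N
    | inr (inr _), inl i => val i == 1%N
    | _, _ => false
    end.

From HB Require Import structures.
From mathcomp Require Import all_boot all_order all_algebra.
Set Implicit Arguments. Unset Strict Implicit. Unset Printing Implicit Defensive.
Import GRing.Theory.
Local Open Scope ring_scope.

(* Write l_i for the label of v_i and mu for the magic constant. A pendant at
   v_1 forces l_1 = mu, and a pendant at v_2 would force l_2 = mu, hence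
   l_4 = 0 from the sum l_2 + l_4 = mu at v_3. Comparing the sums at v_3 and
   v_4 gives l_4 = l_3 + l_5, while the sum at v_2 (with p_2 = 0) gives
   l_3 + l_4 + l_5 = 0; so h = l_4 is an involution split as l_3 + l_5.
   Conversely, the labels g_1, -g_2, g_1, h, g_2 on v_1, ..., v_5 give the
   magic constant g_1 as soon as the pendants at v_1 carry nonzero labels
   summing to h: all equal to h if p_1 is odd, and g_1, g_2, h, ..., h if p_1
   is even. *)

Lemma involution_mulrn (A : zmodType) (h : A) (n : nat) :
  h + h = 0 -> h *+ n = h *+ odd n.
Proof.
move=> hh; elim: n => // n IH.
by rewrite mulrS IH /=; case: (odd n); rewrite ?addr0.
Qed.

Lemma involution_nonzero_sum (A : zmodType) (h g1 g2 : A) (p : nat) :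
  (0 < p)%N -> involution h -> g1 != 0 -> g2 != 0 -> g1 + g2 = h ->
  exists2 f : 'I_p -> A, (forall k, f k != 0) & \sum_k f k = h.
Proof.
move=> p_gt0 [h_nz hh] g1_nz g2_nz g12.
case p_odd: (odd p).
  exists (fun=> h) => //.
  by rewrite sumr_const card_ord involution_mulrn // p_odd.
case: p p_gt0 p_odd => [|[|n]] //= _; rewrite negbK => n_odd.
exists (fun k => nth h [:: g1; g2] k).
  by case=> -[|[|k]] _ //=; rewrite nth_nil.
rewrite !big_ord_recl /= (eq_bigr (fun=> h)) => [|i _]; last first.
  by rewrite nth_default // !lift0.
by rewrite sumr_const card_ord involution_mulrn // n_odd addr0.
Qed.

Lemma big_ord5 (A : nmodType) (F : 'I_5 -> A) :
  \sum_(j < 5) F j =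
  F (Ordinal (isT : 0 < 5)%N) + F (Ordinal (isT : 1 < 5)%N) +
  F (Ordinal (isT : 2 < 5)%N) + F (Ordinal (isT : 3 < 5)%N) +
  F (Ordinal (isT : 4 < 5)%N).
Proof.
rewrite !big_ord_recl big_ord0 addr0 !addrA.
by do 4?congr (_ + _); congr F; apply: val_inj.
Qed.

Local Notation v i := (inl (@Ordinal 5 i.-1 isT)).
Local Notation pend1 k := (inr (inl k)).
Local Notation pend2 k := (inr (inr k)).

Section NeighbourhoodSums.
Variables (p1 p2 : nat) (A : zmodType) (l : M12_vert p1 p2 -> A).
Local Notation nsum x := (\sum_(u | M12_adj x u) l u).

Local Ltac expand_nsum := rewrite big_sumType /= big_sumType /= !big_pred0_eq
  big_mkcond big_ord5 /= ?addr0 ?add0r.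

Lemma nsum_v1 : nsum (v 1) = l (v 2) + \sum_(k < p1) l (pend1 k).
Proof. by expand_nsum. Qed.

Lemma nsum_v2 :
  nsum (v 2) = l (v 1) + l (v 3) + l (v 4) + l (v 5) + \sum_(k < p2) l (pend2 k).
Proof. by expand_nsum. Qed.

Lemma nsum_v3 : nsum (v 3) = l (v 2) + l (v 4).
Proof. by expand_nsum. Qed.

Lemma nsum_v4 : nsum (v 4) = l (v 2) + l (v 3) + l (v 5).
Proof. by expand_nsum. Qed.

Lemma nsum_v5 : nsum (v 5) = l (v 2) + l (v 4).
Proof. by expand_nsum. Qed.

Lemma nsum_pend1 k : nsum (pend1 k) = l (v 1).
Proof. by expand_nsum. Qed.

Lemma nsum_pend2 k : nsum (pend2 k) = l (v 2).
Proof. by expand_nsum. Qed.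

End NeighbourhoodSums.

Lemma M12_magic_pendants2_eq0 (A : zmodType) (p1 p2 : nat) :
  vertex_magic (@M12_adj p1 p2) A -> p2 = 0%N.
Proof.
move=> [l [l_nz [mu l_mu]]]; case: (posnP p2) => // p2_gt0.
have l2_mu : l (v 2) = mu by rewrite -(nsum_pend2 l (Ordinal p2_gt0)).
have : l (v 2) + l (v 4) = l (v 2) + 0 by rewrite -nsum_v3 l_mu l2_mu addr0.
by move/addrI/eqP; rewrite (negbTE (l_nz _)).
Qed.

Lemma M12_magic_involution (A : zmodType) (p1 : nat) :
  (0 < p1)%N -> vertex_magic (@M12_adj p1 0) A ->
  exists h : A, involution h /\
    exists g1 g2 : A, g1 != 0 /\ g2 != 0 /\ g1 + g2 = h.
Proof.
move=> p1_gt0 [l [l_nz [mu l_mu]]].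
have l1_mu : l (v 1) = mu by rewrite -(nsum_pend1 l (Ordinal p1_gt0)).
have sum345 : l (v 3) + l (v 4) + l (v 5) = 0.
  have := l_mu (v 2); rewrite nsum_v2 big_ord0 addr0 -l1_mu -!addrA.
  by rewrite -{2}[l (v 1)]addr0 => /addrI.
have split4 : l (v 4) = l (v 3) + l (v 5).
  by apply: (@addrI _ (l (v 2))); rewrite addrA -(nsum_v4 l) -(nsum_v3 l) !l_mu.
exists (l (v 4)); split; first by split; rewrite // {1}split4 addrAC.
by exists (l (v 3)), (l (v 5)); rewrite !l_nz -split4.
Qed.

Lemma M12_magic_of_involution (A : zmodType) (p1 : nat) (h g1 g2 : A) :
  (0 < p1)%N -> involution h -> g1 != 0 -> g2 != 0 -> g1 + g2 = h ->
  vertex_magic (@M12_adj p1 0) A.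
Proof.
move=> p1_gt0 h_inv g1_nz g2_nz g12.
have [f f_nz f_sum] := involution_nonzero_sum p1_gt0 h_inv g1_nz g2_nz g12.
have [h_nz hh] := h_inv.
pose l (x : M12_vert p1 0) : A := match x with
  | inl i => nth 0 [:: g1; - g2; g1; h; g2] i
  | inr (inl k) => f k
  | inr (inr _) => h
  end.
have Ng2_h : - g2 + h = g1 by rewrite -g12 addrC addrK.
exists l; split.
  by case=> [[[|[|[|[|[|//]]]]] /= _]|[k|k]] //=; rewrite oppr_eq0.
exists g1 => -[i|[k|[]//]].
  case: i => -[|[|[|[|[|//]]]]] lt_i5; rewrite (bool_irrelevance lt_i5 isT).
  - by rewrite nsum_v1 /= f_sum.
  - rewrite nsum_v2 big_ord0 /= addr0 -addrA (addrC h) addrA -(addrA g1) g12.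
    by rewrite -addrA hh addr0.
  - by rewrite nsum_v3 /= Ng2_h.
  - by rewrite nsum_v4 /= addrAC addNr add0r.
  - by rewrite nsum_v5 /= Ng2_h.
by rewrite nsum_pend1.
Qed.

Theorem proposition4p10 (A : zmodType) (p1 p2 : nat) (hp1 : (1 <= p1)%N) :
  vertex_magic (@M12_adj p1 p2) A <->
  (p2 = 0%N /\
   exists h : A, involution h /\
     exists g1 g2 : A, g1 != 0 /\ g2 != 0 /\ g1 + g2 = h).
Proof.
split=> [magic | [-> [h [h_inv [g1 [g2 [g1_nz [g2_nz g12]]]]]]]]; last first.
  exact: M12_magic_of_involution hp1 h_inv g1_nz g2_nz g12.
have p2_0 := M12_magic_pendants2_eq0 magic; subst p2.
by split; last exact: M12_magic_involution hp1 magic.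
Qed.
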